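(* Let $q$ be a prime integer different from $p$. For every $0\le k\le r$, the ideal $\mathcal S^k(q)=[(q),(q),\dots,(q)]$ (with $(q)=qR_j$ in each $R_j$, $0\le j\le k$) is a prime ideal of $\Omega_{H_k}$.
   Context: Fix a prime $p$ and an integer $r\ge0$. For $0\le k\le r$ let $R_k$ be the commutative ring which is free as a $\mathbb{Z}$-module with basis $X_{k,0},\dots,X_{k,k}$ and multiplication $X_{k,i}X_{k,j}=p^{k-\max(i,j)}X_{k,\min(i,j)}$; thus $X_{k,k}=1$, and an integer $n$ is identified with $nX_{k,k}$. For $0\le k\le\ell\le r$ define: the additive map $\mathrm{ind}^\ell_k:R_k\to R_\ell$, $X_{k,i}\mapsto X_{\ell,i}$; the ring homomorphism $\mathrm{res}^\ell_k:R_\ell\to R_k$, $\mathrm{res}^\ell_k(X_{\ell,i})=p^{\ell-k}X_{k,i}$ if $i\le k$ and $=p^{\ell-i}$ if $i\ge k$; and the multiplicative map $\mathrm{jnd}^\ell_k:R_k\to R_\ell$, $$\mathrm{jnd}^\ell_k\Big(\sum_{i=0}^k m_iX_{k,i}\Big)=m_kX_{\ell,\ell}+\sum_{k\le i<\ell}\frac{m_k^{p^{\ell-i}}-m_k^{p^{\ell-i-1}}}{p^{\ell-i}}X_{\ell,i}+\sum_{0\le i<k}\frac{(\sum_{s=i}^k m_sp^{k-s})^{p^{\ell-k}}-(\sum_{s=i+1}^k m_sp^{k-s})^{p^{\ell-k}}}{p^{\ell-i}}X_{\ell,i}$$ ($m_i\in\mathbb{Z}$). For $k=\ell$ these maps are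 the identity. These data form the Burnside Tambara functor on $\mathbb{Z}/p^r\mathbb{Z}$; keeping indices $\le n$ gives $\Omega_{H_n}$. An ideal of $\Omega_{H_n}$ is a sequence $[I_0,\dots,I_n]$ of ideals $I_k\subseteq R_k$ such that for every $1\le k\le n$: $\mathrm{ind}^k_{k-1}(I_{k-1})\subseteq I_k$, $\mathrm{res}^k_{k-1}(I_k)\subseteq I_{k-1}$, $\mathrm{jnd}^k_{k-1}(I_{k-1})\subseteq I_k$. It is proper if $I_0\ne R_0$. A proper ideal is prime if for all $0\le\ell\le k\le n$, $a\in R_k$, $b\in R_\ell$: whenever $(\mathrm{jnd}^m_i\mathrm{res}^k_i(a))\cdot(\mathrm{jnd}^m_j\mathrm{res}^\ell_j(b))\in I_m$ for all $0\le i\le k$, $0\le j\le\ell$, $m=\max(i,j)$, then $a\in I_k$ or $b\in I_\ell$. *)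

From HB Require Import structures.
From mathcomp Require Import all_boot all_order all_algebra.
Set Implicit Arguments. Unset Strict Implicit. Unset Printing Implicit Defensive.
Import Order.TTheory GRing.Theory Num.Theory.
Local Open Scope ring_scope.

(* R_k : free Z-module on X_{k,0},...,X_{k,k}; an element is its coefficient
   vector (m_0,...,m_k). *)
Definition R (k : nat) := {ffun 'I_k.+1 -> int}.

Definition cf (k : nat) (a : R k) (i : nat) : int :=
  if (i <= k)%N then a (inord i) else 0.

Definition addR (k : nat) (a b : R k) : R k := [ffun i => a i + b i].
Definition zeroR (k : nat) : R k := [ffun => 0].

(* the integer n, identified with n X_{k,k} *)
Definition intR (k : nat) (n : int) : R k :=
  [ffun i : 'I_k.+1 => if val i == k then n else 0].

(* X_{k,i} X_{k,j} = p^(k - max(i,j)) X_{k,min(i,j)}, extended bilinearly *)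
Definition mulR (p k : nat) (a b : R k) : R k :=
  [ffun m : 'I_k.+1 => \sum_(i < k.+1) \sum_(j < k.+1)
     (if minn i j == val m then a i * b j * (p%:Z) ^+ (k - maxn i j) else 0)].

Definition indR (k l : nat) (a : R k) : R l := [ffun i : 'I_l.+1 => cf a i].

(* res^l_k : X_{l,i} |-> p^(l-k) X_{k,i} (i <= k), p^(l-i) X_{k,k} (i >= k) *)
Definition resR (p l k : nat) (a : R l) : R k :=
  [ffun j : 'I_k.+1 =>
     if (j < k)%N then (p%:Z) ^+ (l - k) * cf a j
     else \sum_(k <= i < l.+1) (p%:Z) ^+ (l - i) * cf a i].

(* jnd^l_k, the multiplicative transfer (norm), as in the paper;
   the divisions are exact divisions of integers. *)
Definition jndR (p k l : nat) (a : R k) : R l :=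
  [ffun i : 'I_l.+1 =>
     if val i == l then cf a k
     else if (k <= i)%N then
       ((cf a k) ^+ (p ^ (l - i)) - (cf a k) ^+ (p ^ (l - i - 1)))
         %/ ((p%:Z) ^+ (l - i))
     else
       ((\sum_(i <= s < k.+1) cf a s * (p%:Z) ^+ (k - s)) ^+ (p ^ (l - k))
        - (\sum_(i.+1 <= s < k.+1) cf a s * (p%:Z) ^+ (k - s)) ^+ (p ^ (l - k)))
         %/ ((p%:Z) ^+ (l - i))]%Z.

Definition is_ring_ideal (p k : nat) (J : R k -> Prop) : Prop :=
  [/\ J (zeroR k),
      (forall a b, J a -> J b -> J (addR a b)) &
      (forall c a, J a -> J (mulR p c a))].

(* a sequence [I_0,...,I_n] of subsets I_k of R_k (values for k > n ignored) *)
Definition seq_ideal := forall k : nat, R k -> Prop.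

Definition is_tambara_ideal (p n : nat) (I : seq_ideal) : Prop :=
  (forall k, (k <= n)%N -> is_ring_ideal p (I k)) /\
  (forall k, (1 <= k <= n)%N ->
     (forall a : R k.-1, I k.-1 a -> I k (@indR k.-1 k a)) /\
     (forall a : R k, I k a -> I k.-1 (@resR p k k.-1 a)) /\
     (forall a : R k.-1, I k.-1 a -> I k (@jndR p k.-1 k a))).

Definition is_proper (I : seq_ideal) : Prop := ~ (forall a : R 0, I 0%N a).

Definition is_prime_tambara_ideal (p n : nat) (I : seq_ideal) : Prop :=
  [/\ is_tambara_ideal p n I, is_proper I &
   forall (k l : nat) (a : R k) (b : R l), (l <= k)%N -> (k <= n)%N ->
     (forall i j : nat, (i <= k)%N -> (j <= l)%N ->
        I (maxn i j) (mulR p (@jndR p i (maxn i j) (@resR p k i a))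
                             (@jndR p j (maxn i j) (@resR p l j b)))) ->
     I k a \/ I l b].

Definition principal (p : nat) (n : int) : seq_ideal :=
  fun k a => exists b : R k, a = mulR p (intR k n) b.

From HB Require Import structures.
From mathcomp Require Import all_boot all_order all_algebra all_field zify.
Set Implicit Arguments. Unset Strict Implicit. Unset Printing Implicit Defensive.
Import Order.TTheory GRing.Theory Num.Theory.
Local Open Scope ring_scope.

(* The key observation is that an element of R_j lies in (q) = q R_j exactly
   when all its coordinates m_0, ..., m_j are divisible by q, since (q) is
   generated by the scalar q.  With this description:
   - ind and res preserve (q) because they are Z-linear with integer matrices;
     jnd preserves it because its coordinates are exact quotients of
     differences of powers of multiples of q by powers of p, and q is prime to
     p.  Exactness of these quotients is Fermat's little theorem, iterated by
     the "lifting the exponent" step  p^e | a - b  ==>  p^(e+1) | a^p - b^p.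
   - Primality is read off the top coordinate X_{m,m}.  The top coordinate of
     jnd^m_i res^k_i a is the mark  phi_i(a) = sum_{s>=i} p^(k-s) m_s  and the
     top coordinate is multiplicative, so the hypothesis says that q divides
     every product phi_i(a) phi_j(b); by Euclid q divides all marks of a or all
     marks of b, and since phi_i(a) - phi_(i+1)(a) = p^(k-i) m_i with p^(k-i)
     prime to q, the coordinates are then divisible by q as well. *)

Section IntArithmetic.

Variable p : nat.
Hypothesis p_prime : prime p.

Lemma dvdz_fermat (m : int) : (p%:Z %| m ^+ p - m)%Z.
Proof.
rewrite (dvdz_pcharf (pchar_Fp p_prime)) rmorphB rmorphXn /=.
have := @expf_card _ (m%:~R : 'F_p); rewrite card_Fp // => ->.
by rewrite subrr.
Qed.

(* Lifting the exponent by one step: p^e | a - b implies p^(e+1) | a^p - b^p,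
   as a^p - b^p = (a - b) * sum_i a^i b^(p-1-i) and the sum is p b^(p-1) = 0
   modulo p. *)
Lemma dvdz_lift_step (e : nat) (a b : int) : (0 < e)%N ->
  (p%:Z ^+ e %| a - b)%Z -> (p%:Z ^+ e.+1 %| a ^+ p - b ^+ p)%Z.
Proof.
move=> e_gt0 pe_ab; rewrite subrXX exprSr; apply: dvdz_mul => //.
have : (p%:Z %| a - b)%Z by apply: dvdz_trans pe_ab; apply: dvdz_exp.
rewrite !(dvdz_pcharf (pchar_Fp p_prime)) rmorphB /= subr_eq0 => /eqP ab_modp.
rewrite rmorph_sum /= (eq_bigr (fun _ => (b%:~R : 'F_p) ^+ p.-1)); last first.
  move=> i _; rewrite rmorphM !rmorphXn /= ab_modp -exprD subnK //.
  by rewrite -ltnS prednK ?prime_gt0.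
by rewrite sumr_const card_ord -mulr_natr (pcharf0 (pchar_Fp p_prime)) mulr0.
Qed.

Lemma dvdz_lift (e n : nat) (a b : int) : (0 < e)%N ->
  (p%:Z ^+ e %| a - b)%Z -> (p%:Z ^+ (e + n) %| a ^+ (p ^ n) - b ^+ (p ^ n))%Z.
Proof.
move=> e_gt0 pe_ab; elim: n => [|n IHn]; first by rewrite addn0 expn0 !expr1.
rewrite addnS expnSr !exprM; apply: dvdz_lift_step IHn.
by rewrite addn_gt0 e_gt0.
Qed.

(* The exact divisibility behind the coordinates k <= i < l of jnd:
   p^j | m^(p^j) - m^(p^(j-1)) for j > 0. *)
Lemma dvdz_fermat_tower (j : nat) (m : int) : (0 < j)%N ->
  (p%:Z ^+ j %| m ^+ (p ^ j) - m ^+ (p ^ (j - 1)))%Z.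
Proof.
case: j => [//|j] _; rewrite subn1 /= expnS exprM -(add1n j).
by apply: dvdz_lift => //; rewrite expr1 dvdz_fermat.
Qed.

End IntArithmetic.

Lemma dvdz_divz_coprime (q d x : int) : coprimez q d ->
  (q %| x)%Z -> (d %| x)%Z -> (q %| (x %/ d)%Z)%Z.
Proof.
by move=> cop_qd q_x d_x; move: q_x; rewrite -{1}(divzK d_x) Gauss_dvdzl.
Qed.

Lemma coprimez_prime_expr (p q e : nat) : prime p -> prime q -> q != p ->
  coprimez q%:Z (p%:Z ^+ e).
Proof.
move=> p_prime q_prime q_neq_p; apply: coprimezXr; rewrite coprimezE /=.
by rewrite prime_coprime // dvdn_prime2.
Qed.

Lemma dvdz_prime_mul (q : nat) (x y : int) : prime q ->
  (q%:Z %| x * y)%Z -> (q%:Z %| x)%Z \/ (q%:Z %| y)%Z.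
Proof.
by move=> q_prime; rewrite !dvdzE abszM Euclid_dvdM //; case/orP; [left|right].
Qed.

Definition dvd_coords (q : int) (k : nat) (a : R k) : Prop :=
  forall i : 'I_k.+1, (q %| a i)%Z.

Lemma mulR_intR (p k : nat) (n : int) (b : R k) :
  mulR p (intR k n) b = [ffun i => n * b i].
Proof.
apply/ffunP => m; rewrite !ffunE big_ord_recr /= big1 ?add0r.
  rewrite (bigD1 m) //= big1 ?addr0.
    rewrite ffunE eqxx (minn_idPr (leq_ord m)) eqxx (maxn_idPl (leq_ord m)).
    by rewrite subnn expr0 mulr1.
  by move=> j j_neq_m; rewrite (minn_idPr (leq_ord j)) ifN.
move=> i _; apply: big1 => j _; rewrite ffunE /=.
have -> : (i == k :> nat) = false by apply/negbTE; rewrite neq_ltn ltn_ord.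
by rewrite !mul0r; case: ifP.
Qed.

Lemma principalP (p k : nat) (q : int) (a : R k) : q != 0 ->
  @principal p q k a <-> dvd_coords q a.
Proof.
move=> q_neq0; split=> [[b ->] i|q_a].
  by rewrite mulR_intR ffunE dvdz_mulr.
exists [ffun i => (a i %/ q)%Z]; apply/ffunP => i.
by rewrite mulR_intR !ffunE mulrC divzK.
Qed.

Lemma dvd_coords_cf (q : int) (k : nat) (a : R k) (s : nat) :
  dvd_coords q a -> (q %| cf a s)%Z.
Proof. by move=> q_a; rewrite /cf; case: ifP => _; [apply: q_a | apply: dvdz0]. Qed.

Lemma principal_ring_ideal (p k : nat) (q : int) : q != 0 ->
  is_ring_ideal p (principal p q (k := k)).
Proof.
move=> q_neq0; split.
- by apply/principalP => // i; rewrite ffunE dvdz0.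
- move=> a b /(principalP _ _ q_neq0) q_a /(principalP _ _ q_neq0) q_b.
  by apply/principalP => // i; rewrite ffunE rpredD.
- move=> c a /(principalP _ _ q_neq0) q_a; apply/principalP => // i.
  rewrite ffunE; apply: rpred_sum => j _; apply: rpred_sum => l _.
  by case: ifP => _; [rewrite dvdz_mulr ?dvdz_mull | exact: dvdz0].
Qed.

(* ind and res are given by integer matrices *)
Lemma indR_dvd_coords (q : int) (k l : nat) (a : R k) :
  dvd_coords q a -> dvd_coords q (@indR k l a).
Proof. by move=> q_a i; rewrite ffunE dvd_coords_cf. Qed.

Lemma resR_dvd_coords (p : nat) (q : int) (l k : nat) (a : R l) :
  dvd_coords q a -> dvd_coords q (@resR p l k a).
Proof.
move=> q_a i; rewrite ffunE.
case: ifP => _; first by rewrite dvdz_mull ?dvd_coords_cf.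
by apply: rpred_sum => s _; rewrite dvdz_mull ?dvd_coords_cf.
Qed.

(* jnd^l_k preserves (q) for all k <= l: each coordinate is an exact quotient,
   by a power of p, of a difference of powers of multiples of q. *)
Lemma jndR_dvd_coords (p q k l : nat) (a : R k) :
  prime p -> prime q -> q != p -> (k <= l)%N ->
  dvd_coords q%:Z a -> dvd_coords q%:Z (@jndR p k l a).
Proof.
move=> p_prime q_prime q_neq_p k_le_l q_a i; rewrite ffunE.
have pn_gt0 n : (0 < p ^ n)%N by rewrite expn_gt0 prime_gt0.
have cop n := coprimez_prime_expr n p_prime q_prime q_neq_p.
case: eqP => [_|i_neq_l]; first exact: dvd_coords_cf.
have i_lt_l : (i < l)%N by rewrite ltn_neqAle -ltnS ltn_ord andbT; apply/eqP.
case: ifP => [k_le_i|/negbT]; last rewrite -ltnNge => i_lt_k.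
  apply: dvdz_divz_coprime (cop _) _ _.
    by rewrite rpredB // dvdz_exp ?dvd_coords_cf.
  by apply: dvdz_fermat_tower; rewrite ?subn_gt0.
pose tail j := \sum_(j <= s < k.+1) cf a s * p%:Z ^+ (k - s).
have tail_diff : tail i - tail i.+1 = cf a i * p%:Z ^+ (k - i).
  by rewrite /tail (@big_ltn _ _ _ i) ?ltnS 1?ltnW // addrK.
have -> : (l - i = (k - i) + (l - k))%N by lia.
apply: dvdz_divz_coprime (cop _) _ _.
  by rewrite rpredB // dvdz_exp // rpred_sum // => s _;
    rewrite dvdz_mulr ?dvd_coords_cf.
by apply: dvdz_lift; rewrite ?subn_gt0 // tail_diff dvdz_mull.
Qed.

Lemma principal_tambara_ideal (p q n : nat) : prime p -> prime q -> q != p ->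
  is_tambara_ideal p n (principal p q%:Z).
Proof.
move=> p_prime q_prime q_neq_p.
have q_neq0 : q%:Z != 0 by rewrite eqz_nat -lt0n prime_gt0.
split=> [k _|]; first exact: principal_ring_ideal.
case=> [//|k] _ /=; split; [|split] => a /(principalP _ _ q_neq0) q_a;
  apply/(principalP _ _ q_neq0).

- exact: indR_dvd_coords.
- exact: resR_dvd_coords.
- exact: jndR_dvd_coords.
Qed.

Lemma principal_proper (p q : nat) : (1 < q)%N -> is_proper (principal p q%:Z).
Proof.
move=> q_gt1 all_in.
have q_neq0 : q%:Z != 0 by rewrite eqz_nat -lt0n ltnW.
have /(principalP _ _ q_neq0)/(_ ord0) := all_in (intR 0 1).
by rewrite ffunE eqxx dvdz1 /= => /eqP q_eq1; rewrite q_eq1 in q_gt1.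
Qed.

Lemma mulR_top (p k : nat) (x y : R k) :
  mulR p x y ord_max = x ord_max * y ord_max.
Proof.
rewrite ffunE big_ord_recr /= big1 ?add0r.
  rewrite big_ord_recr /= big1 ?add0r.
    by rewrite minnn eqxx maxnn subnn mulr1.
  by move=> j _; rewrite ifN // (minn_idPr (ltnW (ltn_ord j))) neq_ltn ltn_ord.
move=> i _; apply: big1 => j _; rewrite ifN //.
by rewrite neq_ltn (leq_ltn_trans (geq_minl _ _) (ltn_ord i)).
Qed.

Lemma cf_ord (k : nat) (a : R k) (i : 'I_k.+1) : cf a i = a i.
Proof. by rewrite /cf -ltnS ltn_ord inord_val. Qed.

Lemma cf_top (k : nat) (a : R k) : cf a k = a ord_max.
Proof. by rewrite -cf_ord. Qed.

Lemma jndR_top (p i m : nat) (a : R i) : @jndR p i m a ord_max = cf a i.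
Proof. by rewrite ffunE /= eqxx. Qed.

(* The mark phi_i(a) = sum_{s >= i} p^(k-s) m_s of a in R_k: the top
   coordinate of res^k_i a. *)
Definition mark (p k : nat) (a : R k) (i : nat) : int :=
  \sum_(i <= s < k.+1) p%:Z ^+ (k - s) * cf a s.

Lemma resR_top (p k i : nat) (a : R k) : cf (@resR p k i a) i = mark p a i.
Proof. by rewrite cf_top ffunE /= ltnn. Qed.

Lemma mark_step (p k i : nat) (a : R k) : (i <= k)%N ->
  mark p a i = p%:Z ^+ (k - i) * cf a i + mark p a i.+1.
Proof. by move=> i_le_k; rewrite /mark big_ltn. Qed.

Lemma marks_dvd_coords (p q k : nat) (a : R k) : prime p -> prime q -> q != p ->
  (forall i, (i <= k)%N -> (q%:Z %| mark p a i)%Z) -> dvd_coords q%:Z a.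
Proof.
move=> p_prime q_prime q_neq_p q_marks i; rewrite -cf_ord.
have i_le_k : (i <= k)%N by rewrite -ltnS.
have q_next : (q%:Z %| mark p a i.+1)%Z.
  have [|k_lt_Si] := leqP i.+1 k; first exact: q_marks.
  by rewrite /mark big_geq.
have := q_marks i i_le_k; rewrite mark_step // rpredDr //.
by rewrite Gauss_dvdzr // coprimez_prime_expr.
Qed.

(* Primality: the hypothesis, read at the top coordinate, says that q divides
   every product of a mark of a and a mark of b. *)
Lemma principal_prime_condition (p q k l : nat) (a : R k) (b : R l) :
  prime p -> prime q -> q != p ->
  (forall i j : nat, (i <= k)%N -> (j <= l)%N ->
     principal p q%:Z (mulR p (@jndR p i (maxn i j) (@resR p k i a))
                             (@jndR p j (maxn i j) (@resR p l j b)))) ->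
  principal p q%:Z a \/ principal p q%:Z b.
Proof.
move=> p_prime q_prime q_neq_p prod_in.
have q_neq0 : q%:Z != 0 by rewrite eqz_nat -lt0n prime_gt0.
have q_marks i j : (i <= k)%N -> (j <= l)%N ->
    (q%:Z %| mark p a i * mark p b j)%Z.
  move=> i_le_k j_le_l.
  have /(principalP _ _ q_neq0)/(_ ord_max) := prod_in i j i_le_k j_le_l.
  by rewrite mulR_top !jndR_top !resR_top.
have [q_a|/forallPn[i0 q_not_a]] :=
  boolP [forall i : 'I_k.+1, q%:Z %| mark p a i]%Z.
  left; apply/(principalP _ _ q_neq0)/(marks_dvd_coords p_prime q_prime q_neq_p).
  move=> i i_le_k.
  by move/forallP: q_a => /(_ (Ordinal (i_le_k : (i < k.+1)%N))).
right; apply/(principalP _ _ q_neq0)/(marks_dvd_coords p_prime q_prime q_neq_p).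
move=> j j_le_l.
have [q_i0|//] := dvdz_prime_mul q_prime (q_marks i0 j (leq_ord i0) j_le_l).
by rewrite q_i0 in q_not_a.
Qed.

Theorem proposition6 (p q r k : nat) :
  prime p -> prime q -> q != p -> (k <= r)%N ->
  is_prime_tambara_ideal p k (principal p q%:Z).
Proof.
move=> p_prime q_prime q_neq_p _; split.
- exact: principal_tambara_ideal.
- exact/principal_proper/prime_gt1.
- by move=> k' l a b _ _; exact: principal_prime_condition.
Qed.
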